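(* Let $(X,G)$ be a free exact $G$-odometer determined by a decreasing sequence $\{G_n\}_{n\ge0}$ of finite-index normal subgroups of $G$. Then: (1) for each $n$, the group $[[G]]_n$ is isomorphic to a semidirect product $G_n^{[G:G_n]}\rtimes S_{[G:G_n]}$, where $S_p$ denotes the symmetric group on $p$ letters (the normal factor $G_n^{[G:G_n]}$ corresponding to the elements of $[[G]]_n$ that leave each atom of $\mathcal P_n$ invariant, and $S_{[G:G_n]}$ to the permutation of the atoms of $\mathcal P_n$); (2) the topological full group $[[G]]$ is the increasing union (inductive limit) of these groups $[[G]]_n\cong G_n^{[G:G_n]}\rtimes S_{[G:G_n]}$.
   Context: Exact $G$-odometer: for a decreasing sequence of finite-index normal subgroups $G_n$ of $G$, the inverse limit $X=\varprojlim(G/G_n,\pi_n)$ under the natural quotient maps, with $G$ acting by left multiplication coordinatewise. $C_n$ is the set of $x=(x_k)\in X$ with $x_n=G_n$, and $\mathcal P_n=\{f\cdot C_n:f\in F_n\}$ for a set $F_n$ of representatives of $G/G_n$, a clopen partition of $X$. Topological full group $[[G]]$: all homeomorphisms $s$ of $X$ such that every $x$ has a clopen neighborhood $U$ and some $g\in G$ with $s=g$ on $U$. For $\gamma\in[[G]]$, $f(\gamma,x)\in G$ is the unique element with $f(\gamma,x)\cdot x=\gamma\cdot x$; $[[G]]_n$ is the subgroup of $\gamma\in[[G]]$ with $f(\gamma,\cdot)$ constant on each atom of $\mathcal P_n$. *)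

From mathcomp Require Import all_boot all_fingroup.
Unset Printing Implicit Defensive.

Record AbsGroup := {
  gcar :> Type;
  gmul : gcar -> gcar -> gcar;
  gone : gcar;
  ginv : gcar -> gcar;
  gmulA : forall a b c, gmul a (gmul b c) = gmul (gmul a b) c;
  gmul1l : forall a, gmul gone a = a;
  gmul1r : forall a, gmul a gone = a;
  gmulVl : forall a, gmul (ginv a) a = gone;
  gmulVr : forall a, gmul a (ginv a) = gone }.
Arguments gmul {a0}. Arguments ginv {a0}.

Section Odometer.
Variable G : AbsGroup.
Local Notation "a ** b" := (gmul a b) (at level 40, left associativity).

Definition is_subgrp (H : G -> Prop) : Prop :=
  H (gone G) /\ (forall a b, H a -> H b -> H (a ** b)) /\ (forall a, H a -> H (ginv a)).

Definition is_normal_sub (H : G -> Prop) : Prop :=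
  forall g h, H h -> H (g ** h ** ginv g).

(* e : 'I_p -> G is a set of representatives of G/H (so [G:H] = p) *)
Definition is_coset_reps (H : G -> Prop) (p : nat) (e : 'I_p -> G) : Prop :=
  (forall g, exists i, H (ginv (e i) ** g)) /\
  (forall i j, H (ginv (e i) ** e j) -> i = j).

Definition finite_index (H : G -> Prop) : Prop :=
  exists p (e : 'I_p -> G), is_coset_reps H p e.

Definition odo_coset (H : G -> Prop) (a : G) : G -> Prop := fun h => H (ginv a ** h).
Definition is_odo_coset (H : G -> Prop) (c : G -> Prop) : Prop := exists a, c = odo_coset H a.
(* the natural map G/H' -> G/H (H' <= H): aH' |-> aH *)
Definition coset_proj (H : G -> Prop) (c : G -> Prop) : G -> Prop :=
  fun h => exists a, c a /\ H (ginv a ** h).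

(* points of the inverse limit X = lim (G/G_k, pi_k) *)
Definition odo_point (Gn : nat -> G -> Prop) (x : nat -> G -> Prop) : Prop :=
  (forall k, is_odo_coset (Gn k) (x k)) /\ (forall k, coset_proj (Gn k) (x k.+1) = x k).

Definition Odo (Gn : nat -> G -> Prop) := {x : nat -> G -> Prop | odo_point Gn x}.

Definition rawact (g : G) (x : nat -> G -> Prop) : nat -> G -> Prop :=
  fun k h => x k (ginv g ** h).

Variable Gn : nat -> G -> Prop.
Local Notation X := (Odo Gn).

Definition free_action : Prop :=
  forall (g : G) (x : X), rawact g (sval x) = sval x -> g = gone G.

(* topology of X: the inverse-limit (product of discrete) topology,
   with basis the cylinders {y | y_k = x_k} *)
Definition is_open (U : X -> Prop) : Prop :=
  forall x, U x -> exists k, forall y : X, sval y k = sval x k -> U y.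
Definition is_clopen (U : X -> Prop) : Prop := is_open U /\ is_open (fun x => ~ U x).
Definition cont_X (s : X -> X) : Prop :=
  forall U, is_open U -> is_open (fun x => U (s x)).
Definition homeo (s : X -> X) : Prop :=
  exists t : X -> X, cancel s t /\ cancel t s /\ cont_X s /\ cont_X t.

Definition in_TFG (s : X -> X) : Prop :=
  homeo s /\
  forall x : X, exists U : X -> Prop, is_clopen U /\ U x /\
    exists g : G, forall y, U y -> sval (s y) = rawact g (sval y).

(* [[G]]_n : f(s, .) is constant on each atom of P_n; the atoms of P_n are
   the sets {x | x_n = c} for c in G/G_n.  "f(s,x) = g" is "g.x = s x". *)
Definition in_TFGn (n : nat) (s : X -> X) : Prop :=
  in_TFG s /\
  forall x y : X, sval x n = sval y n ->
    forall g : G, rawact g (sval x) = sval (s x) -> rawact g (sval y) = sval (s y).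

End Odometer.

(* semidirect product H^p x| S_p, S_p permuting coordinates:
   (h, s)(h', s') = (h . s(h'), s o s')  with (s(h'))_i = h'_(s^-1 i).
   Note: in mathcomp (s * t) x = t (s x), so s o s' is (s' * s)%g. *)
Definition wreath_mem (G : AbsGroup) (H : G -> Prop) (p : nat)
  (w : ('I_p -> G) * {perm 'I_p}) : Prop := forall i, H (w.1 i).

Definition wreath_mul (G : AbsGroup) (p : nat) (w w' : ('I_p -> G) * {perm 'I_p})
  : ('I_p -> G) * {perm 'I_p} :=
  (fun i => gmul (w.1 i) (w'.1 (((w.2)^-1)%g i)), (w'.2 * w.2)%g).
Arguments is_subgrp {G}. Arguments is_normal_sub {G}. Arguments finite_index {G}.
Arguments is_coset_reps {G}. Arguments odo_coset {G}. Arguments is_odo_coset {G}.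
Arguments coset_proj {G}. Arguments odo_point {G}. Arguments Odo {G}. Arguments rawact {G}.
Arguments free_action {G}. Arguments is_open {G Gn}. Arguments is_clopen {G Gn}.
Arguments cont_X {G Gn}. Arguments homeo {G Gn}. Arguments in_TFG {G Gn}.
Arguments in_TFGn {G Gn}. Arguments wreath_mem {G} H {p}. Arguments wreath_mul {G p}.

(* An element s of [[G]]_n is a bijection of X that acts on each atom e_i C_n
   of P_n as left multiplication by one element g_i, unique because the action
   is free.  Recording the permutation sigma of the atoms together with the
   corrections e_(sigma i)^-1 g_i e_i, which lie in G_n, gives an injective
   homomorphism into the wreath product G_n^p x| S_p; every (h, sigma) is
   realised by translating e_i C_n by e_(sigma i) h_(sigma i) e_i^-1.
   For (2), the cylinders on which some s in [[G]] is a single translation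
   cover X, and since every level G/G_k is finite, Koenig's lemma (compactness
   of the inverse limit) yields one level n that works everywhere. *)

From Stdlib Require Import ClassicalEpsilon FunctionalExtensionality.
From Stdlib Require Import PropExtensionality ProofIrrelevance.
From mathcomp Require Import all_boot all_fingroup.

Section AbstractGroup.
Context {G : AbsGroup}.
Local Notation "a ** b" := (gmul a b) (at level 40, left associativity).
Implicit Types (a b g : G) (H : G -> Prop).

Lemma gmulKl a b : ginv a ** (a ** b) = b.
Proof. by rewrite gmulA gmulVl gmul1l. Qed.

Lemma gmulKVl a b : a ** (ginv a ** b) = b.
Proof. by rewrite gmulA gmulVr gmul1l. Qed.

Lemma gmulKr a b : a ** b ** ginv b = a.
Proof. by rewrite -gmulA gmulVr gmul1r. Qed.

Lemma gmulKVr a b : a ** ginv b ** b = a.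
Proof. by rewrite -gmulA gmulVl gmul1r. Qed.

Lemma gmul_middle_inj a b b' c : a ** b ** c = a ** b' ** c -> b = b'.
Proof.
move=> /(congr1 (fun d => ginv a ** (d ** ginv c))).
by rewrite !gmulKr !gmulKl.
Qed.

Lemma ginvK a : ginv (ginv a) = a.
Proof. by rewrite -[RHS](gmulKl (ginv a) a) gmulVl gmul1r. Qed.

Lemma ginvM a b : ginv (a ** b) = ginv b ** ginv a.
Proof. by rewrite -[RHS]gmul1l -(gmulVl _ (a ** b)) -!gmulA gmulKVl gmulVr gmul1r. Qed.

Lemma ginv1 : ginv (gone G) = gone G.
Proof. by rewrite -[LHS]gmul1r gmulVl. Qed.

Lemma odo_coset_eqP {H a b} : is_subgrp H ->
  odo_coset H a = odo_coset H b <-> H (ginv a ** b).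
Proof.
move=> [H1 [HM HV]]; split=> [eq_ab | Hab].
  have Hbb : odo_coset H b b by rewrite /odo_coset gmulVl.
  by rewrite -eq_ab in Hbb.
apply: functional_extensionality => h; apply: propositional_extensionality.
rewrite /odo_coset; split=> Hh.
  by have := HM _ _ (HV _ Hab) Hh; rewrite ginvM ginvK gmulA gmulKr.
by have := HM _ _ Hab Hh; rewrite gmulA gmulKr.
Qed.

Lemma odo_coset_translate H g a :
  (fun h => odo_coset H a (ginv g ** h)) = odo_coset H (g ** a).
Proof. by apply: functional_extensionality => h; rewrite /odo_coset ginvM gmulA. Qed.

Lemma odo_coset_mull H g a b :
  odo_coset H a = odo_coset H b -> odo_coset H (g ** a) = odo_coset H (g ** b).
Proof. by move=> eq_ab; rewrite -!odo_coset_translate eq_ab. Qed.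

Lemma coset_proj_odo_coset H H' a : is_subgrp H -> is_subgrp H' ->
  (forall g, H' g -> H g) -> coset_proj H (odo_coset H' a) = odo_coset H a.
Proof.
move=> [_ [HM _]] [H'1 _] subH'H.
apply: functional_extensionality => h; apply: propositional_extensionality.
rewrite /coset_proj /odo_coset; split=> [[b [H'ab Hbh]] | Hah].
  by have := HM _ _ (subH'H _ H'ab) Hbh; rewrite gmulA gmulKr.
by exists a; rewrite gmulVl.
Qed.

Lemma coset_reps_cover {H p e c} : is_subgrp H -> is_coset_reps H p e ->
  is_odo_coset H c -> exists i, c = odo_coset H (e i).
Proof.
move=> subH [cover _] [a ->]; have [i Hia] := cover a.
exists i; apply/(odo_coset_eqP subH).
by have := subH.2.2 _ Hia; rewrite ginvM ginvK.
Qed.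

End AbstractGroup.

Section OdometerAction.
Context {G : AbsGroup}.
Local Notation "a ** b" := (gmul a b) (at level 40, left associativity).
Context {Gn : nat -> G -> Prop}.
Hypothesis Hsub : forall n, is_subgrp (Gn n).
Hypothesis Hdecr : forall n g, Gn n.+1 g -> Gn n g.
Local Notation X := (Odo Gn).
Implicit Types (g : G) (x y : X) (s t : X -> X).

Lemma rawact_coset g {x : nat -> G -> Prop} {k a} :
  x k = odo_coset (Gn k) a -> rawact g x k = odo_coset (Gn k) (g ** a).
Proof. by move=> xk; rewrite /rawact xk odo_coset_translate. Qed.

Lemma rawactM g g' (x : nat -> G -> Prop) : rawact g (rawact g' x) = rawact (g ** g') x.
Proof.
apply: functional_extensionality => k; apply: functional_extensionality => h.
by rewrite /rawact ginvM gmulA.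
Qed.

Lemma rawact1 (x : nat -> G -> Prop) : rawact (gone G) x = x.
Proof.
apply: functional_extensionality => k; apply: functional_extensionality => h.
by rewrite /rawact ginv1 gmul1l.
Qed.

Let coset_proj_level k a : coset_proj (Gn k) (odo_coset (Gn k.+1) a) = odo_coset (Gn k) a.
Proof. exact: coset_proj_odo_coset (Hsub k) (Hsub k.+1) (Hdecr k). Qed.

Lemma odo_point_rawact g x : odo_point Gn (rawact g (sval x)).
Proof.
have [is_coset proj] := svalP x; split=> k.
  by have [a xk] := is_coset k; exists (g ** a); exact: rawact_coset.
have [a xk] := is_coset k.+1.
rewrite (rawact_coset g xk) coset_proj_level; symmetry; apply: rawact_coset.
by rewrite -proj xk coset_proj_level.
Qed.

Definition odo_act g x : X := exist _ _ (odo_point_rawact g x).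

Lemma odo_point_origin : odo_point Gn (fun k => odo_coset (Gn k) (gone G)).
Proof. by split=> k; [exists (gone G) | exact: coset_proj_level]. Qed.

Definition odo_origin : X := exist _ _ odo_point_origin.

Lemma odo_eq x y : sval x = sval y -> x = y.
Proof. exact: (eq_sig_hprop (fun _ => proof_irrelevance _)). Qed.

Lemma odo_agree_le {x y k m} : k <= m -> sval y m = sval x m -> sval y k = sval x k.
Proof.
move=> /subnK <-; elim: (m - k) => [//|d IH]; rewrite addSn => ym.
by apply: IH; rewrite -(proj2 (svalP x)) -(proj2 (svalP y)) ym.
Qed.

Definition translates_on n s x : Prop :=
  exists g, forall y, sval y n = sval x n -> sval (s y) = rawact g (sval y).

Definition piecewise_translation n s : Prop := forall x, translates_on n s x.

Lemma translates_on_mono k m s x : k <= m -> translates_on k s x -> translates_on m s x.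
Proof. by move=> le_km [g sg]; exists g => y yx; apply: sg; exact: odo_agree_le le_km yx. Qed.

Lemma translates_on_local k s x y :
  sval y k = sval x k -> translates_on k s x -> translates_on k s y.
Proof. by move=> yx [g sg]; exists g => z zy; apply: sg; rewrite zy yx. Qed.

Lemma piecewise_translation_succ {n s} :
  piecewise_translation n s -> piecewise_translation n.+1 s.
Proof. by move=> tr x; exact: translates_on_mono (leqnSn n) (tr x). Qed.

Lemma piecewise_translation_comp {n s t} : piecewise_translation n s ->
  piecewise_translation n t -> piecewise_translation n (s \o t).
Proof.
move=> trs trt x; have [a ta] := trt x; have [b sb] := trs (t x).
exists (b ** a) => y yx; have tyx : sval (t y) n = sval (t x) n.
  by rewrite (ta _ yx) (ta x erefl) /rawact yx.
by rewrite /= (sb _ tyx) (ta _ yx) rawactM.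
Qed.

Lemma piecewise_translation_cont {n s} : piecewise_translation n s -> cont_X s.
Proof.
move=> tr U openU x Usx; have [k Uk] := openU _ Usx; have [g sg] := tr x.
exists (maxn n k) => y yx; apply: Uk.
rewrite (sg _ (odo_agree_le (leq_maxl n k) yx)) (sg x erefl) /rawact.
by rewrite (odo_agree_le (leq_maxr n k) yx).
Qed.

(* The inverse of [s] translates the image [s y] of the atom of [y] back by the inverse element. *)
Lemma piecewise_translation_inv {n s t} : cancel s t -> cancel t s ->
  piecewise_translation n s -> piecewise_translation n t.
Proof.
move=> st ts tr x; have [g sg] := tr (t x).
exists (ginv g) => y yx; pose z := odo_act (ginv g) y.
have sx : sval x = rawact g (sval (t x)) by rewrite -{1}(ts x); exact: sg.
have zn : sval z n = sval (t x) n.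
  have -> : sval z n = rawact (ginv g) (sval x) n by rewrite /= /rawact yx.
  by rewrite sx rawactM gmulVl rawact1.
have sz : s z = y by apply: odo_eq; rewrite (sg _ zn) rawactM gmulVr rawact1.
by rewrite -{1}sz st.
Qed.

End OdometerAction.

Section TopologicalFullGroup.
Context {G : AbsGroup}.
Local Notation "a ** b" := (gmul a b) (at level 40, left associativity).
Context {Gn : nat -> G -> Prop}.
Hypothesis Hsub : forall n, is_subgrp (Gn n).
Hypothesis Hdecr : forall n g, Gn n.+1 g -> Gn n g.
Hypothesis Hfree : free_action Gn.
Local Notation X := (Odo Gn).
Implicit Types (g : G) (x y : X) (s t : X -> X).

Lemma free_rawact_inj g g' x : rawact g (sval x) = rawact g' (sval x) -> g = g'.
Proof.
move=> gx; have fixed : rawact (ginv g' ** g) (sval x) = sval x.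
  by rewrite -rawactM gx rawactM gmulVl rawact1.
by rewrite -[g](gmulKVl g') (Hfree _ _ fixed) gmul1r.
Qed.

Lemma in_TFGnP n s : in_TFGn n s <-> bijective s /\ piecewise_translation n s.
Proof.
split=> [[[[t [st [ts _]]] locs] const] | [[t st ts] tr]].
  split=> [|x]; first by exists t.
  have [U [_ [Ux [g sg]]]] := locs x.
  by exists g => y yx; rewrite -(const x y (esym yx) g) // sg.
split; first split.
- exists t; split=> //; split=> //; split; first exact: piecewise_translation_cont tr.
  exact: piecewise_translation_cont (piecewise_translation_inv Hsub Hdecr st ts tr).
- move=> x; exists (fun y => sval y n = sval x n).
  split; first by split=> y Uy; exists n => z ->.
  by split=> //; have [g sg] := tr x; exists g.
- move=> x y xy g gx; have [g0 sg0] := tr x.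
  have -> : g = g0 by apply: (free_rawact_inj _ _ x); rewrite gx (sg0 x erefl).
  by rewrite (sg0 y (esym xy)).
Qed.

Lemma in_TFGn_comp n s t : in_TFGn n s -> in_TFGn n t -> in_TFGn n (fun x => s (t x)).
Proof.
move=> /in_TFGnP [bs trs] /in_TFGnP [bt trt]; apply/in_TFGnP.
by split; [exact: bij_comp | exact: piecewise_translation_comp].
Qed.

Lemma in_TFGn_succ n s : in_TFGn n s -> in_TFGn n.+1 s.
Proof.
by move=> /in_TFGnP [bs tr]; apply/in_TFGnP; split; last exact: piecewise_translation_succ.
Qed.

End TopologicalFullGroup.

Lemma fintype_cofinal (T : finType) (P : T -> nat -> Prop) :
  (forall i m m', m <= m' -> P i m' -> P i m) ->
  (forall m, exists i, P i m) -> exists i, forall m, P i m.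
Proof.
move=> antiP coverP; apply: NNPP => noP.
have [bound boundP] : exists bound : T -> nat, forall i, ~ P i (bound i).
  suff failP i : exists m, ~ P i m.
    pose choose i := constructive_indefinite_description _ (failP i).
    by exists (fun i => sval (choose i)) => i; exact: svalP (choose i).
  by apply: NNPP => allP; apply: noP; exists i => m; apply: NNPP => nPm; apply: allP; exists m.
have [i Pi] := coverP (\max_i bound i).
exact: boundP i (antiP i _ _ (leq_bigmax i) Pi).
Qed.

Lemma nat_chain (A : Type) (R : nat -> A -> A -> Prop) (a0 : A) :
  (forall k a, exists b, R k a b) -> exists f : nat -> A, f 0 = a0 /\ forall k, R k (f k) (f k.+1).
Proof.
move=> next; pose step k a := sval (constructive_indefinite_description _ (next k a)).
exists (fix f k := if k is k'.+1 then step k' (f k') else a0); split=> // k.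
exact: svalP (constructive_indefinite_description _ (next k _)).
Qed.

Section Compactness.
Context {G : AbsGroup} {Gn : nat -> G -> Prop}.
Hypothesis Hsub : forall n, is_subgrp (Gn n).
Hypothesis Hfin : forall n, finite_index (Gn n).
Local Notation X := (Odo Gn).
Variable Q : nat -> X -> Prop.
Hypothesis Q_local : forall k x y, sval y k = sval x k -> Q k x -> Q k y.
Hypothesis Q_mono : forall k m x, k <= m -> Q k x -> Q m x.

Let unbounded (P : X -> Prop) := forall m, exists x, P x /\ ~ Q m x.

(* Pigeonhole over the finitely many atoms of level [k]. *)
Lemma unbounded_refine k {P} : unbounded P ->
  exists c, is_odo_coset (Gn k) c /\ unbounded (fun x => P x /\ sval x k = c).
Proof.
move=> unbP; have [p [e He]] := Hfin k.
have [i Hi] : exists i, forall m, exists x,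
    (P x /\ sval x k = odo_coset (Gn k) (e i)) /\ ~ Q m x.
  apply: fintype_cofinal => [i m m' le_mm' [x [Px nQx]] | m].
    by exists x; split=> // Qx; apply: nQx; exact: Q_mono le_mm' Qx.
  have [x [Px nQx]] := unbP m.
  have [i xk] := coset_reps_cover (Hsub k) He (proj1 (svalP x) k).
  by exists i, x.
by exists (odo_coset (Gn k) (e i)); split=> //; exists (e i).
Qed.

(* Compactness of [X] (Koenig's lemma): otherwise some branch of atoms stays
   unbounded at every level, and its limit point has no admissible level. *)
Lemma uniform_level : (forall x, exists k, Q k x) -> exists n, forall x, Q n x.
Proof.
move=> coverQ; apply: NNPP => noLevel.
have unbT : unbounded (fun _ => True).
  move=> m; apply: NNPP => noBad; apply: noLevel; exists m => x.
  by apply: NNPP => nQx; apply: noBad; exists x.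
pose bad_atom k c := is_odo_coset (Gn k) c /\ unbounded (fun x => sval x k = c).
have [c0 bad_c0] : exists c, bad_atom 0 c.
  have [c [Hc unbc]] := unbounded_refine 0 unbT.
  by exists c; split=> // m; have [x [[_ xc] nQx]] := unbc m; exists x.
pose refines k c c' := bad_atom k c -> bad_atom k.+1 c' /\ coset_proj (Gn k) c' = c.
have refine k c : exists c', refines k c c'.
  case: (classic (bad_atom k c)) => [[_ unbc] | nbad]; last by exists c.
  have [c' [Hc' unbc']] := unbounded_refine k.+1 unbc.
  exists c' => _; split.
    by split=> // m; have [x [[_ xc'] nQx]] := unbc' m; exists x.
  by have [x [[xc xc'] _]] := unbc' 0; rewrite -xc' (proj2 (svalP x) k).
have [c [c_0 c_S]] := nat_chain _ refines c0 refine.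
have bad_c k : bad_atom k (c k).
  by elim: k => [|k IH]; [rewrite c_0 | exact: (c_S k IH).1].
have c_point : odo_point Gn c by split=> k; [exact: (bad_c k).1 | exact: (c_S k (bad_c k)).2].
have [k Qk] := coverQ (exist _ c c_point).
have [y [yk nQy]] := (bad_c k).2 k.
exact: nQy (Q_local k (exist _ c c_point) y yk Qk).
Qed.

End Compactness.

Lemma in_TFG_piecewise_translation {G : AbsGroup} {Gn : nat -> G -> Prop}
    (Hsub : forall n, is_subgrp (Gn n)) (Hfin : forall n, finite_index (Gn n))
    {s : Odo Gn -> Odo Gn} :
  in_TFG s -> exists n, piecewise_translation n s.
Proof.
move=> [_ locs]; apply: (uniform_level Hsub Hfin) => [k x y | k m x | x].
- exact: translates_on_local.
- exact: translates_on_mono.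
- have [U [[openU _] [Ux [g sg]]]] := locs x; have [k Uk] := openU x Ux.
  by exists k, g => y yx; apply: sg; exact: Uk.
Qed.

Definition perm_or_id {T : finType} (f : T -> T) : {perm T} :=
  if injectiveP f is ReflectT f_inj then perm f_inj else 1%g.

Lemma perm_or_idE (T : finType) (f : T -> T) : injective f -> perm_or_id f =1 f.
Proof. by rewrite /perm_or_id; case: injectiveP => // f_inj _ x; rewrite permE. Qed.

Section WreathCoordinates.
Context {G : AbsGroup} {Gn : nat -> G -> Prop}.
Local Notation "a ** b" := (gmul a b) (at level 40, left associativity).
Hypothesis Hsub : forall n, is_subgrp (Gn n).
Hypothesis Hdecr : forall n g, Gn n.+1 g -> Gn n g.
Hypothesis Hfree : free_action Gn.
Local Notation X := (Odo Gn).
Local Notation act := (odo_act Hsub Hdecr).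
Variables (n p : nat) (e : 'I_p -> G).
Hypothesis He : is_coset_reps (Gn n) p e.
Implicit Types (g : G) (x y : X) (s t : X -> X) (i j : 'I_p).

Let atom_sig x := constructive_indefinite_description _
  (coset_reps_cover (Hsub n) He (proj1 (svalP x) n)).

Definition atom x : 'I_p := sval (atom_sig x).

Lemma atomP x : sval x n = odo_coset (Gn n) (e (atom x)).
Proof. exact: svalP (atom_sig x). Qed.

Lemma coset_reps_inj i j : odo_coset (Gn n) (e i) = odo_coset (Gn n) (e j) -> i = j.
Proof. by move/(odo_coset_eqP (Hsub n)); exact: He.2. Qed.

Lemma atom_eq x i : sval x n = odo_coset (Gn n) (e i) -> atom x = i.
Proof. by move=> xi; apply: coset_reps_inj; rewrite -atomP. Qed.

Definition atom_pt i : X := act (e i) (odo_origin Hsub Hdecr).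

Lemma atom_ptP i : sval (atom_pt i) n = odo_coset (Gn n) (e i).
Proof.
by rewrite /= (rawact_coset (x := fun k => odo_coset (Gn k) (gone G)) (e i) erefl) gmul1r.
Qed.

Lemma atom_pt_atom i : atom (atom_pt i) = i.
Proof. exact: atom_eq (atom_ptP i). Qed.

Definition transl s i : G :=
  epsilon (inhabits (gone G)) (fun g => sval (s (atom_pt i)) = rawact g (sval (atom_pt i))).

Definition atom_map s i : 'I_p := atom (s (atom_pt i)).

(* If [s] is the translation [g_j] on the atom [e_j C_n] and maps it onto
   [e_(sigma j) C_n], its coordinate at [sigma j] is [e_(sigma j)^-1 g_j e_j],
   which lies in [G_n]. *)
Definition wreath_coord s : ('I_p -> G) * {perm 'I_p} :=
  let sigma := perm_or_id (atom_map s) in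
  (fun i => ginv (e i) ** transl s ((sigma^-1)%g i) ** e ((sigma^-1)%g i), sigma).

Lemma transl_eq s i g : sval (s (atom_pt i)) = rawact g (sval (atom_pt i)) -> transl s i = g.
Proof.
move=> sg; apply: (free_rawact_inj Hfree _ _ (atom_pt i)); rewrite -sg.
pose P g' := sval (s (atom_pt i)) = rawact g' (sval (atom_pt i)).
by have <- := epsilon_spec (inhabits (gone G)) P (ex_intro P g sg).
Qed.

Section PiecewiseTranslation.
Variable s : X -> X.
Hypothesis tr : piecewise_translation n s.

Lemma translE i y : sval y n = odo_coset (Gn n) (e i) ->
  sval (s y) = rawact (transl s i) (sval y).
Proof.
move=> yi; have [g sg] := tr (atom_pt i).
by rewrite (transl_eq s i g (sg _ erefl)); apply: sg; rewrite yi atom_ptP.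
Qed.

Lemma transl_coset i :
  odo_coset (Gn n) (transl s i ** e i) = odo_coset (Gn n) (e (atom_map s i)).
Proof.
rewrite -(rawact_coset _ (atom_ptP i)) -(translE _ _ (atom_ptP i)); exact: atomP.
Qed.

Lemma transl_mem i : Gn n (ginv (e (atom_map s i)) ** (transl s i ** e i)).
Proof. by apply/(odo_coset_eqP (Hsub n)); rewrite transl_coset. Qed.

Hypothesis bs : bijective s.

(* If two atoms had the same image, [s] would identify a point of the first
   with a translate of the base point of the second. *)
Lemma atom_map_inj : injective (atom_map s).
Proof.
move=> i i' eq_ii'; case: bs => t st _.
pose z := act (ginv (transl s i) ** transl s i') (atom_pt i').
have zi : sval z n = odo_coset (Gn n) (e i).
  rewrite /z /= (rawact_coset _ (atom_ptP i')) -gmulA -[e i](gmulKl (transl s i) (e i)).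
  by apply: odo_coset_mull; rewrite !transl_coset eq_ii'.
have z_pt : z = atom_pt i'.
  rewrite -(st z) -[atom_pt i']st; congr t; apply: odo_eq.
  by rewrite (translE _ _ zi) (translE _ _ (atom_ptP i')) /= rawactM gmulKVl.
by apply: coset_reps_inj; rewrite -zi z_pt atom_ptP.
Qed.

Lemma perm_or_id_atom_map : perm_or_id (atom_map s) =1 atom_map s.
Proof. exact: perm_or_idE atom_map_inj. Qed.

End PiecewiseTranslation.

Local Notation TFGnP := (in_TFGnP Hsub Hdecr Hfree).

Section Composition.
Variables s t : X -> X.
Hypotheses (trs : piecewise_translation n s) (trt : piecewise_translation n t).

Lemma atom_map_comp j : atom_map (s \o t) j = atom_map s (atom_map t j).
Proof.
apply: atom_eq; rewrite /= (translE s trs _ _ (atomP _)) (rawact_coset _ (atomP _)).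
exact: transl_coset.
Qed.

Lemma transl_comp j : transl (s \o t) j = transl s (atom_map t j) ** transl t j.
Proof.
apply: transl_eq.
by rewrite /= (translE s trs _ _ (atomP _)) (translE t trt _ _ (atom_ptP j)) rawactM.
Qed.

End Composition.

Lemma wreath_coord_comp s t : in_TFGn n s -> in_TFGn n t ->
  wreath_coord (fun x => s (t x)) = wreath_mul (wreath_coord s) (wreath_coord t).
Proof.
move=> /TFGnP [bs trs] /TFGnP [bt trt].
have trst := piecewise_translation_comp trs trt.
have sigma_comp : perm_or_id (atom_map (s \o t)) =
    (perm_or_id (atom_map t) * perm_or_id (atom_map s))%g.
  apply/permP => j; rewrite permM (perm_or_id_atom_map _ trst (bij_comp bs bt)).
  by rewrite !perm_or_id_atom_map // atom_map_comp.
rewrite /wreath_coord /wreath_mul /= sigma_comp; congr pair.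
apply: functional_extensionality => i.
rewrite invMg permM (transl_comp s t trs trt) -(perm_or_id_atom_map t) // permKV.
by rewrite !gmulA gmulKr.
Qed.

Lemma wreath_coord_inj s t : in_TFGn n s -> in_TFGn n t ->
  wreath_coord s = wreath_coord t -> s = t.
Proof.
move=> /TFGnP [bs trs] /TFGnP [bt trt] eq_st.
have sigma_st : perm_or_id (atom_map s) = perm_or_id (atom_map t) by have := congr1 snd eq_st.
have transl_st j : transl s j = transl t j.
  have := congr1 (fun h => h.1 (perm_or_id (atom_map s) j)) eq_st.
  by rewrite /= -sigma_st permK; exact: gmul_middle_inj.
apply: functional_extensionality => x; apply: odo_eq.
by rewrite (translE s trs _ _ (atomP x)) (translE t trt _ _ (atomP x)) transl_st.
Qed.

Lemma wreath_coord_mem s : in_TFGn n s -> wreath_mem (Gn n) (wreath_coord s).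
Proof.
move=> /TFGnP [bs tr] i; have := transl_mem s tr ((perm_or_id (atom_map s))^-1 i)%g.
by rewrite -(perm_or_id_atom_map s tr bs) permKV gmulA.
Qed.

Lemma wreath_coord_atom s : in_TFGn n s -> forall i x, sval x n = odo_coset (Gn n) (e i) ->
  sval (s x) n = odo_coset (Gn n) (e ((wreath_coord s).2 i)).
Proof.
move=> /TFGnP [bs tr] i x xi; rewrite /= (perm_or_id_atom_map s tr bs) -transl_coset //.
by rewrite (translE s tr _ _ xi); exact: rawact_coset.
Qed.

Section Realisation.
Variable w : ('I_p -> G) * {perm 'I_p}.
Hypothesis Hw : wreath_mem (Gn n) w.

Definition wreath_transl j : G := e (w.2 j) ** w.1 (w.2 j) ** ginv (e j).

Definition wreath_elt x : X := act (wreath_transl (atom x)) x.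

Lemma atom_wreath_elt x : atom (wreath_elt x) = w.2 (atom x).
Proof.
apply: atom_eq; rewrite /= (rawact_coset _ (atomP x)) /wreath_transl gmulKVr.
apply/(odo_coset_eqP (Hsub n)); rewrite ginvM gmulKVr; exact: (Hsub n).2.2 _ (Hw _).
Qed.

Lemma wreath_elt_bij : bijective wreath_elt.
Proof.
exists (fun x => act (ginv (wreath_transl ((w.2^-1)%g (atom x)))) x) => x; apply: odo_eq.
  by rewrite /= atom_wreath_elt permK rawactM gmulVl rawact1.
have atom_inv :
    atom (act (ginv (wreath_transl ((w.2^-1)%g (atom x)))) x) = (w.2^-1)%g (atom x).
  apply: atom_eq; rewrite /= (rawact_coset _ (atomP x)) /wreath_transl permKV.
  rewrite !ginvM !ginvK !gmulA gmulKVr; apply/(odo_coset_eqP (Hsub n)).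
  by rewrite ginvM ginvK gmulKVr; exact: Hw.
by rewrite /= atom_inv rawactM gmulVr rawact1.
Qed.

Lemma wreath_elt_piecewise : piecewise_translation n wreath_elt.
Proof.
move=> x; exists (wreath_transl (atom x)) => y yx.
by rewrite /= (atom_eq y (atom x)) // yx atomP.
Qed.

Lemma wreath_coord_wreath_elt : wreath_coord wreath_elt = w.
Proof.
have atom_map_w i : atom_map wreath_elt i = w.2 i.
  by rewrite /atom_map atom_wreath_elt atom_pt_atom.
have sigma_w : perm_or_id (atom_map wreath_elt) = w.2.
  apply/permP => i; rewrite perm_or_id_atom_map ?atom_map_w //.
    exact: wreath_elt_piecewise.
  exact: wreath_elt_bij.
have transl_w i : transl wreath_elt i = wreath_transl i.
  by apply: transl_eq; rewrite /= atom_pt_atom.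
rewrite /wreath_coord /= sigma_w [RHS]surjective_pairing; congr pair.
apply: functional_extensionality => i.
by rewrite transl_w /wreath_transl permKV !gmulA gmulVl gmul1l gmulKVr.
Qed.

End Realisation.

Lemma wreath_coord_surj w : wreath_mem (Gn n) w ->
  exists s, in_TFGn n s /\ wreath_coord s = w.
Proof.
move=> Hw; exists (wreath_elt w); split; last exact: wreath_coord_wreath_elt.
by apply/TFGnP; split; [exact: wreath_elt_bij | exact: wreath_elt_piecewise].
Qed.

End WreathCoordinates.

Theorem proposition4p5 (G : AbsGroup) (Gn : nat -> G -> Prop)
  (Hsub : forall n, is_subgrp (Gn n))
  (Hnormal : forall n, is_normal_sub (Gn n))
  (Hfin : forall n, finite_index (Gn n))
  (Hdecr : forall n g, Gn n.+1 g -> Gn n g)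
  (Hfree : free_action Gn) :
  (forall (n p : nat) (e : 'I_p -> G), is_coset_reps (Gn n) p e ->
     exists phi : (Odo Gn -> Odo Gn) -> ('I_p -> G) * {perm 'I_p},
       (forall s t : Odo Gn -> Odo Gn, in_TFGn n s -> in_TFGn n t -> in_TFGn n (fun x => s (t x))) /\
       (forall s : Odo Gn -> Odo Gn, in_TFGn n s -> wreath_mem (Gn n) (phi s)) /\
       (forall s t : Odo Gn -> Odo Gn, in_TFGn n s -> in_TFGn n t ->
          phi (fun x => s (t x)) = wreath_mul (phi s) (phi t)) /\
       (forall s t : Odo Gn -> Odo Gn, in_TFGn n s -> in_TFGn n t -> phi s = phi t -> s = t) /\
       (forall w, wreath_mem (Gn n) w -> exists s, in_TFGn n s /\ phi s = w) /\
       (forall s : Odo Gn -> Odo Gn, in_TFGn n s -> forall (i : 'I_p) (x : Odo Gn),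
          sval x n = odo_coset (Gn n) (e i) ->
          sval (s x) n = odo_coset (Gn n) (e ((phi s).2 i)))) /\
  (forall n (s : Odo Gn -> Odo Gn), in_TFGn n s -> in_TFGn n.+1 s) /\
  (forall s : Odo Gn -> Odo Gn, in_TFG s -> exists n, in_TFGn n s).
Proof.
split; [move=> n p e He | split].
- exists (wreath_coord Hsub Hdecr n p e He).
  split; last split; last split; last split; last split.
  + exact: in_TFGn_comp.
  + exact: wreath_coord_mem.
  + exact: wreath_coord_comp.
  + exact: wreath_coord_inj.
  + exact: wreath_coord_surj.
  + exact: wreath_coord_atom.
- exact: in_TFGn_succ.
- move=> s TFGs; have [n tr] := in_TFG_piecewise_translation Hsub Hfin TFGs.
  exists n; apply/(in_TFGnP Hsub Hdecr Hfree); split=> //.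
  by case: TFGs => [[t [st [ts _]]] _]; exists t.
Qed.
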